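(* Let $A \subset \mathbb{Z}^d$ be a finite set whose convex hull $\Delta_A$ is a $d$-dimensional simplex with vertices $v_1, \ldots, v_{d+1}$. Let $\widetilde{v} = (v,1) \in \mathbb{Z}^{d+1}$ denote the lift of $v \in \mathbb{Z}^d$, and let $\mathcal{C}_A = \{\sum_{a \in A} n_a \widetilde{a} : n_a \in \mathbb{N}\}$. Call $(g,H) \in \mathcal{C}_A$ (with $g \in \mathbb{Z}^d$, $H \in \mathbb{N}$) a minimal element of $\mathcal{C}_A$ if $(g,H) - \widetilde{v}_i \notin \mathcal{C}_A$ for every $i = 1, \ldots, d+1$, and enumerate the minimal elements of $\mathcal{C}_A$ as $(g_1,H_1), (g_2,H_2), \ldots$. Then for every $h \in \mathbb{N}$, \[ hA = \bigcup_j \Big\{ g_j + \sum_{i=1}^{d+1} k_i v_i : k_i \in \mathbb{N} \text{ for all } i, \ \sum_{i=1}^{d+1} k_i = h - H_j \Big\}. \]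
   Context: $\mathbb{N} = \{0,1,2,\ldots\}$. For $h \in \mathbb{N}$, $hA = \{a_1 + \cdots + a_h : a_i \in A\}$, with $0A = \{0\}$. *)

From HB Require Import structures.
From mathcomp Require Import all_boot all_order all_algebra.
Set Implicit Arguments. Unset Strict Implicit. Unset Printing Implicit Defensive.
Import Order.TTheory GRing.Theory Num.Theory.
Local Open Scope ring_scope.

(* Points of Z^d are row vectors 'rV[int]_d; a finite set A is a seq (duplicates irrelevant). *)

Definition ratv {d : nat} (x : 'rV[int]_d) : 'rV[rat]_d := map_mx (fun z : int => z%:~R) x.

Definition in_conv {d : nat} (S : seq 'rV[rat]_d) (x : 'rV[rat]_d) : Prop :=
  exists l : 'rV[rat]_d -> rat,
    (forall s, 0 <= l s) /\ \sum_(s <- undup S) l s = 1 /\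
    x = \sum_(s <- undup S) l s *: s.

Definition aff_indep {d n : nat} (v : 'I_n -> 'rV[rat]_d) : Prop :=
  forall l : 'I_n -> rat,
    \sum_i l i = 0 -> \sum_i l i *: v i = 0 -> forall i, l i = 0.

Definition sumset {d : nat} (h : nat) (A : seq 'rV[int]_d) (x : 'rV[int]_d) : Prop :=
  exists f : 'I_h -> 'rV[int]_d, (forall i, f i \in A) /\ x = \sum_i f i.

(* (g,H) in C_A = { sum_a n_a (a,1) : n_a in N } ⊂ Z^(d+1) *)
Definition in_cone {d : nat} (A : seq 'rV[int]_d) (g : 'rV[int]_d) (H : int) : Prop :=
  exists n : 'rV[int]_d -> nat,
    g = \sum_(a <- undup A) a *+ n a /\ H = (\sum_(a <- undup A) n a)%:Z.

Definition minimal_elt {d : nat} (A : seq 'rV[int]_d) (v : 'I_d.+1 -> 'rV[int]_d)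
    (g : 'rV[int]_d) (H : int) : Prop :=
  in_cone A g H /\ forall i, ~ in_cone A (g - v i) (H - 1).

(* The h-fold sumset hA is the slice of the cone C_A at height h.  Given x in hA,
   subtract lifted vertices as long as the result stays in C_A; the height drops
   by one at each step, so this ends at a minimal element (g, H) after h - H steps.
   Conversely g + sum k_i v_i lies in hA once every vertex v_j lies in A: v_j is a
   convex combination of points of A, each having barycentric coordinates in the
   simplex, so by affine independence the combined coordinates are those of v_j,
   and by nonnegativity every point of positive weight equals v_j. *)

From HB Require Import structures.
From mathcomp Require Import all_boot all_order all_algebra.
From Stdlib Require Import ClassicalEpsilon.
Set Implicit Arguments.
Unset Strict Implicit.
Unset Printing Implicit Defensive.

Import Order.TTheory GRing.Theory Num.Theory.
Local Open Scope ring_scope.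

Lemma partition_big_seq (V : nmodType) (I : finType) (T : eqType) (U : seq T)
    (f : I -> T) (F : I -> V) :
  uniq U -> (forall i, f i \in U) ->
  \sum_i F i = \sum_(a <- U) \sum_(i | f i == a) F i.
Proof.
move=> Uu fU; rewrite (exchange_big_dep predT) //=; apply: eq_bigr => i _.
rewrite -big_filter (eq_filter (a2 := pred1 (f i))) => [|a]; last exact: eq_sym.
by rewrite filter_pred1_uniq // big_seq1.
Qed.

Lemma sum_delta (R : pzSemiRingType) (T : eqType) (U : seq T) (s : T) :
  uniq U -> s \in U -> \sum_(t <- U) (t == s)%:R = 1 :> R.
Proof.
by move=> Uu sU; rewrite (bigD1_seq s) //= eqxx big1 ?addr0 // => t /negPf->.
Qed.

Lemma sum_deltaZ (R : pzRingType) (V : lmodType R) (T : eqType) (U : seq T)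
    (s : T) (F : T -> V) :
  uniq U -> s \in U -> \sum_(t <- U) (t == s)%:R *: F t = F s.
Proof.
move=> Uu sU; rewrite (bigD1_seq s) //= eqxx scale1r big1 ?addr0 // => t /negPf->.
exact: scale0r.
Qed.

Section Sumset.
Variables (d : nat) (A : seq 'rV[int]_d).

Lemma sumset0 : sumset 0 A 0.
Proof. by exists (fun=> 0); split; [case | rewrite big_ord0]. Qed.

Lemma sumsetD m k x y : sumset m A x -> sumset k A y -> sumset (m + k) A (x + y).
Proof.
case=> f [fA ->] [g [gA ->]].
exists (fun i => match split i with inl j => f j | inr j => g j end); split.
  by move=> i; case: split.
rewrite big_split_ord /=; congr (_ + _); apply: eq_bigr => i _.
  by rewrite -[lshift _ _]/(unsplit (inl i)) unsplitK.
by rewrite -[rshift _ _]/(unsplit (inr i)) unsplitK.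
Qed.

Lemma sumsetMn a k : a \in A -> sumset k A (a *+ k).
Proof.
move=> aA; elim: k => [|k IHk]; first exact: sumset0.
rewrite mulrSr -addn1; apply: sumsetD IHk _.
by exists (fun=> a); rewrite big_ord1.
Qed.

Lemma sumset_sum (I : eqType) (r : seq I) (F : I -> 'rV[int]_d) (k : I -> nat) :
  {in r, forall i, F i \in A} ->
  sumset (\sum_(i <- r) k i) A (\sum_(i <- r) F i *+ k i).
Proof.
elim: r => [|i r IHr] FA; first by rewrite !big_nil; exact: sumset0.
rewrite !big_cons; apply: sumsetD; first by apply/sumsetMn/FA; rewrite mem_head.
by apply: IHr => j jr; apply: FA; rewrite in_cons jr orbT.
Qed.

Lemma in_cone_sumset x H : in_cone A x H -> exists2 m : nat, H = m & sumset m A x.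
Proof.
case=> n [-> ->]; exists (\sum_(a <- undup A) n a)%N => //.
by apply: sumset_sum => a; rewrite mem_undup.
Qed.

Lemma sumset_in_cone m x : sumset m A x -> in_cone A x m.
Proof.
case=> f [fA ->]; exists (fun a => #|[pred i | f i == a]|).
have fU i : f i \in undup A by rewrite mem_undup.
split; last congr Posz.
  rewrite (partition_big_seq _ (undup_uniq A) fU); apply: eq_bigr => a _.
  by rewrite -sumr_const; apply: eq_bigr => i /eqP.
rewrite -[LHS]card_ord -sum1_card (partition_big_seq _ (undup_uniq A) fU).
by apply: eq_bigr => a _; rewrite sum1_card.
Qed.

End Sumset.

Section Descent.
Variables (d : nat) (A : seq 'rV[int]_d) (v : 'I_d.+1 -> 'rV[int]_d).

Lemma in_cone_minimal_or_step (m : nat) x : in_cone A x m ->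
  minimal_elt A v x m \/ exists i, in_cone A (x - v i) m.-1 /\ (0 < m)%N.
Proof.
move=> xC; have [xmin|/not_all_not_ex[i xiC]] :=
  classic (forall i, ~ in_cone A (x - v i) (m%:Z - 1)); first by left.
right; exists i; have [m' m'E _] := in_cone_sumset xiC.
have mE : m = m'.+1 by apply/eqP; rewrite -eqz_nat -addn1 PoszD -m'E subrK.
by subst m; rewrite m'E in xiC.
Qed.

Lemma in_cone_descent (m : nat) x : in_cone A x m ->
  exists (g : 'rV[int]_d) (H : int), minimal_elt A v g H /\
    exists k : 'I_d.+1 -> nat,
      (\sum_i k i)%:Z = m%:Z - H /\ x = g + \sum_i v i *+ k i.
Proof.
elim/ltn_ind: m x => m IHm x /in_cone_minimal_or_step[xmin|[i [xiC m_gt0]]].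
  exists x, m%:Z; split=> //; exists (fun=> 0%N).
  by rewrite subrr !big1 ?addr0.
have [|g [H [gmin [k [kE xiE]]]]] := IHm m.-1 _ _ xiC; first by rewrite ltn_predL.
exists g, H; split=> //; exists (fun j => k j + (j == i))%N; split.
  rewrite big_split /=.
  have -> : (\sum_j (j == i) = 1)%N.
    by rewrite (bigD1 i) //= eqxx big1 // => j /negPf->.
  by rewrite PoszD kE -[in RHS](prednK m_gt0) -[m.-1.+1]addn1 PoszD addrAC.
under eq_bigr do rewrite mulrnDr.
rewrite big_split /= addrA -xiE (bigD1 i) //= eqxx big1 ?addr0 ?subrK // => j.
by move/negPf->.
Qed.

End Descent.

Lemma in_conv_mem d (S : seq 'rV[rat]_d) s : s \in S -> in_conv S s.
Proof.
rewrite -mem_undup => sS; exists (fun t => (t == s)%:R).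
split=> [t|]; first exact: ler0n.
by rewrite sum_delta ?sum_deltaZ ?undup_uniq.
Qed.

Section AffinelyIndependent.
Variables (d n : nat) (w : 'I_n -> 'rV[rat]_d).
Hypothesis w_indep : aff_indep w.

Lemma aff_indep_coord (l m : 'I_n -> rat) :
  \sum_i l i = \sum_i m i -> \sum_i l i *: w i = \sum_i m i *: w i -> l =1 m.
Proof.
move=> lm lmw i; apply/subr0_eq; move: i.
apply: w_indep; first by rewrite sumrB lm subrr.
by under eq_bigr do rewrite scalerBl; rewrite sumrB lmw subrr.
Qed.

Lemma aff_indep_inj : injective w.
Proof.
move=> i j wij.
have := @aff_indep_coord (fun t => (t == i)%:R) (fun t => (t == j)%:R).
rewrite !sum_delta ?sum_deltaZ ?index_enum_uniq ?mem_index_enum //.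
by move=> /(_ erefl wij i); rewrite eqxx; case: eqP.
Qed.

Lemma in_conv_simplex_coord x : in_conv [seq w i | i <- enum 'I_n] x ->
  exists mu : 'I_n -> rat,
    [/\ forall i, 0 <= mu i, \sum_i mu i = 1 & x = \sum_i mu i *: w i].
Proof.
have wu : uniq [seq w i | i <- enum 'I_n].
  by rewrite (map_inj_uniq aff_indep_inj) enum_uniq.
case=> l [l0 [l1 ->]]; exists (fun i => l (w i)).
by rewrite (undup_id wu) !big_map in l1 *.
Qed.

Lemma simplex_vertex_extreme (U : seq 'rV[rat]_d) (l : 'rV[rat]_d -> rat) j :
  (forall s, 0 <= l s) -> \sum_(s <- U) l s = 1 -> w j = \sum_(s <- U) l s *: s ->
  (forall s, s \in U -> in_conv [seq w i | i <- enum 'I_n] s) ->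
  forall s, s \in U -> l s != 0 -> s = w j.
Proof.
move=> l0 l1 wjE UW s sU ls.
have /choice[mu muP] : forall t, exists mu : 'I_n -> rat, t \in U ->
    [/\ forall i, 0 <= mu i, \sum_i mu i = 1 & t = \sum_i mu i *: w i].
  move=> t; have [/UW/in_conv_simplex_coord[mu ?]|_] := boolP (t \in U).
    by exists mu.
  by exists (fun=> 0).
have comb_coord i : \sum_(t <- U) l t * mu t i = (i == j)%:R.
  apply: (@aff_indep_coord (fun i => \sum_(t <- U) l t * mu t i)
                           (fun i => (i == j)%:R)).
    rewrite sum_delta ?index_enum_uniq ?mem_index_enum // exchange_big /= -l1.
    rewrite big_seq [RHS]big_seq; apply: eq_bigr => t tU.
    by rewrite -mulr_sumr; case: (muP t tU) => _ -> _; rewrite mulr1.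
  rewrite sum_deltaZ ?index_enum_uniq ?mem_index_enum // wjE.
  under eq_bigr do rewrite scaler_suml.
  rewrite exchange_big big_seq [RHS]big_seq; apply: eq_bigr => t tU.
  case: (muP t tU) => _ _ tE.
  by under eq_bigr do rewrite -scalerA; rewrite -scaler_sumr -tE.
have mu_s_eq0 i : i != j -> mu s i = 0.
  move=> ij; have /eqP := comb_coord i.
  rewrite (negPf ij) big_seq psumr_eq0 => [|t tU].
    by move=> /allP/(_ s sU); rewrite sU mulf_eq0 (negPf ls) => /eqP.
  by case: (muP t tU) => mu0 _ _; rewrite mulr_ge0.
case: (muP s sU) => _ mu1 ->.
rewrite (bigD1 j) //= big1 => [|i /mu_s_eq0->]; last exact: scale0r.
have -> : mu s j = 1 by rewrite -mu1 (bigD1 j) //= big1 ?addr0 // => i /mu_s_eq0.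
by rewrite addr0 scale1r.
Qed.

Lemma simplex_vertices_mem (S : seq 'rV[rat]_d) :
  (forall x, in_conv S x <-> in_conv [seq w i | i <- enum 'I_n] x) ->
  forall j, w j \in S.
Proof.
move=> hull j.
have [l [l0 [l1 wjE]]] : in_conv S (w j).
  by apply/hull/in_conv_mem/map_f; rewrite mem_enum.
have [s sU ls] : exists2 s, s \in undup S & l s != 0.
  apply/hasP; apply: contraT => /hasPn l_eq0; move: l1.
  by rewrite big_seq big1 => [/eqP|t /l_eq0/negPn/eqP //]; rewrite eq_sym oner_eq0.
rewrite -mem_undup -(simplex_vertex_extreme l0 l1 wjE _ sU ls) //.
by move=> t; rewrite mem_undup => /in_conv_mem/hull.
Qed.

End AffinelyIndependent.

Lemma ratv_inj d : injective (@ratv d).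
Proof.
move=> a b /matrixP ab; apply/matrixP => i j.
by have := ab i j; rewrite !mxE => /intr_inj.
Qed.

Theorem proposition4p1 (d : nat) (A : seq 'rV[int]_d) (v : 'I_d.+1 -> 'rV[int]_d) :
  (* conv(A) is the d-simplex with vertices v_1, ..., v_{d+1} *)
  aff_indep (fun i => ratv (v i)) ->
  (forall x : 'rV[rat]_d,
      in_conv (map ratv A) x <-> in_conv [seq ratv (v i) | i <- enum 'I_d.+1] x) ->
  forall (h : nat) (x : 'rV[int]_d),
    sumset h A x <->
    exists (g : 'rV[int]_d) (H : int), minimal_elt A v g H /\
      exists k : 'I_d.+1 -> nat,
        (\sum_i k i)%:Z = h%:Z - H /\ x = g + \sum_i v i *+ k i.
Proof.
move=> v_indep hull h x; split=> [/sumset_in_cone|[g [H [[gC _] [k [kE ->]]]]]].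
  exact: in_cone_descent.
have vA i : v i \in A.
  by rewrite -(mem_map (@ratv_inj d)) (simplex_vertices_mem v_indep hull).
have [m mE gS] := in_cone_sumset gC.
have -> : h = (m + \sum_i k i)%N.
  by apply/eqP; rewrite -eqz_nat PoszD kE mE addrC subrK.
exact: sumsetD gS (sumset_sum _ (fun i _ => vA i)).
Qed.
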